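(* Let $(X,\rho)$ be a metric space, $f:X\to X$ continuous, $x\in X$, $\ell\in\mathbb N$, $n\ge2$ an integer and $\varepsilon>0$. Then \[ \mathrm{RR}_\ell(x,n,\varepsilon)=\frac{n}{n-1}\Big[\ell\,C_\ell(x,n,\varepsilon)-(\ell-1)C_{\ell+1}(x,n,\varepsilon)\Big]-\frac1{n-1}+\delta^{\mathrm{RR}}_\ell, \qquad |\delta^{\mathrm{RR}}_\ell|\le\frac{2\ell(\ell-1)}{n}. \]
   Context: Bowen metric $\rho_\ell(y,z)=\max_{0\le i<\ell}\rho(f^iy,f^iz)$; correlation sum $C_\ell(x,n,\varepsilon)=n^{-2}\#\{(i,j):0\le i,j<n,\ \rho_\ell(f^ix,f^jx)\le\varepsilon\}$. Recurrence plot $R(x,n,\varepsilon)$: $n\times n$ matrix ($0\le i,j<n$) with entry $1$ iff $\rho(f^ix,f^jx)\le\varepsilon$. A line of length $\ell$: triple $(i,j,\ell)$ with $0\le i,j\le n-\ell$, $i\ne j$, entries $(i+k,j+k)=1$ for $0\le k<\ell$, entry $(i-1,j-1)=0$ if $\min\{i,j\}>0$, entry $(i+\ell,j+\ell)=0$ if $\max\{i,j\}<n-\ell$. $N_l$ = number of lines of length exactly $l$ (boundary lines included), $\lambda_l=N_l/(n^2-n)$, recurrence rate $\mathrm{RR}_\ell(x,n,\varepsilon)=\sum_{l\ge\ell}l\lambda_l$. *)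

From HB Require Import structures.
From mathcomp Require Import all_boot all_order all_algebra.
From mathcomp Require Import reals.
Set Implicit Arguments. Unset Strict Implicit. Unset Printing Implicit Defensive.
Import Order.TTheory GRing.Theory Num.Theory.
Local Open Scope ring_scope.

Section RecurrenceDefs.
Variables (R : realType) (X : Type) (rho : X -> X -> R) (f : X -> X).

Definition is_metric : Prop :=
  [/\ forall y z, 0 <= rho y z,
      forall y z, rho y z = 0 <-> y = z,
      forall y z, rho y z = rho z y &
      forall y z w, rho y w <= rho y z + rho z w].

Definition metric_continuous : Prop :=
  forall y (e : R), 0 < e -> exists2 d : R, 0 < d &
    forall z, rho y z < d -> rho (f y) (f z) < e.

Definition bowen (l : nat) (y z : X) : R :=
  \big[Num.max/0]_(i < l) rho (iter i f y) (iter i f z).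

Definition corr_sum (l : nat) (x : X) (n : nat) (eps : R) : R :=
  (#|[set p : 'I_n * 'I_n |
       bowen l (iter p.1 f x) (iter p.2 f x) <= eps]|)%:R / (n ^ 2)%:R.

Definition rp_entry (x : X) (eps : R) (i j : nat) : bool :=
  rho (iter i f x) (iter j f x) <= eps.

Definition is_line (x : X) (n : nat) (eps : R) (i j l : nat) : bool :=
  [&& (i <= n - l)%N, (j <= n - l)%N, i != j,
      [forall k : 'I_l, rp_entry x eps (i + k) (j + k)],
      (0 < minn i j)%N ==> ~~ rp_entry x eps i.-1 j.-1 &
      (maxn i j < n - l)%N ==> ~~ rp_entry x eps (i + l) (j + l)].

Definition num_lines (x : X) (n : nat) (eps : R) (l : nat) : nat :=
  #|[set p : 'I_n.+1 * 'I_n.+1 | is_line x n eps p.1 p.2 l]|.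

Definition line_freq (x : X) (n : nat) (eps : R) (l : nat) : R :=
  (num_lines x n eps l)%:R / ((n ^ 2)%:R - n%:R).

(* RR_l(x,n,eps) = sum_{l' >= l} l' lambda_{l'}; lines have length <= n,
   so the sum is over l <= l' <= n. *)
Definition recurrence_rate (l : nat) (x : X) (n : nat) (eps : R) : R :=
  \sum_(l <= l' < n.+1) l'%:R * line_freq x n eps l'.

End RecurrenceDefs.

From HB Require Import structures.
From mathcomp Require Import all_boot all_order all_algebra.
From mathcomp Require Import reals.
From mathcomp Require Import zify ring lra.
Set Implicit Arguments. Unset Strict Implicit. Unset Printing Implicit Defensive.
Import Order.TTheory GRing.Theory Num.Theory.

(* Counting runs that fit in the
   plot and cannot be extended forward, then peeling off their first cell,
   gives sum_{L >= l} L N_L = l B_l + A_{l+1}, where A_m counts off-diagonal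
   runs of length m fitting in the plot and B_m those among them that are
   forward-maximal; moreover A_m = A_{m+1} + B_m.  The correlation sum C_m
   counts all pairs (i, j) in [0, n)^2 starting a run of length m, i.e.
   n^2 C_m = n + A_m + D_m, where n comes from the main diagonal and D_m
   counts the off-diagonal runs sticking out of the plot, of which there are
   at most 2 (m - 1)(n - 1).  Eliminating A and B leaves only D_l and
   D_{l+1} in the error term. *)

Lemma card_pairsE N (P : nat -> nat -> bool) :
  #|[set p : 'I_N * 'I_N | P p.1 p.2]| = \sum_(i < N) \sum_(j < N) P i j.
Proof.
rewrite -sum1dep_card big_mkcond /= (pair_bigA _ (fun i j : 'I_N => P i j : nat)).
by apply: eq_bigr => p _; case: (P _ _).
Qed.

Lemma sum_ord_eq n (i : 'I_n) : \sum_(j < n) (i == j) = 1.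
Proof. by rewrite (bigD1 i) //= eqxx big1 // => j; rewrite eq_sym => /negbTE->. Qed.

Lemma sum_ord_neq n (i : 'I_n) : \sum_(j < n) (i != j) = n.-1.
Proof.
rewrite (bigD1 i) //= eqxx add0n (eq_bigr (fun=> 1)) => [|j].
  by rewrite sum1_card cardC1 card_ord.
by rewrite eq_sym => /negbTE->.
Qed.

Lemma sum_ord_geq N c : \sum_(i < N) (c <= i) <= N - c.
Proof.
elim: N => [|N IH]; first by rewrite big_ord0.
rewrite big_ord_recr /=; move: IH; set S := \sum_(i < N) _.
by case: (leqP c N) => cN /=; lia.
Qed.

Lemma sum_offdiag_late_le n m :
  \sum_(i < n) \sum_(j < n) ((i != j :> nat) && (n < i + m)) <= m.-1 * n.-1.
Proof.
rewrite (eq_bigr (fun i : 'I_n => (n.+1 - m <= i) * n.-1)) => [|i _].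
  rewrite -big_distrl /= leq_mul2r.
  by apply/orP; right; apply: leq_trans (sum_ord_geq n (n.+1 - m)) _; lia.
have -> : (n < i + m) = (n.+1 - m <= i) by apply/idP/idP; lia.
case: leqP => _; last by rewrite big1 // => j _; rewrite andbF.
by rewrite mul1n -(sum_ord_neq i); apply: eq_bigr => j _; rewrite andbT.
Qed.

Section DiagonalRuns.
Variable e : rel nat.

Definition diag_run m i j := all (fun k => e (i + k) (j + k)) (iota 0 m).

Lemma diag_runS m i j : diag_run m.+1 i j = e i j && diag_run m i.+1 j.+1.
Proof.
rewrite /diag_run /= !addn0 -(addn0 1) iotaDl all_map; congr (_ && _).
by apply: eq_in_all => k _ /=; rewrite !addnA !addn1.
Qed.

Lemma diag_runSr m i j : diag_run m.+1 i j = diag_run m i j && e (i + m) (j + m).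
Proof. by rewrite /diag_run -addn1 iotaD all_cat /= andbT add0n. Qed.

Lemma diag_run_forallE m i j :
  [forall k : 'I_m, e (i + k) (j + k)] = diag_run m i j.
Proof.
apply/forallP/allP => [h k | h k].
  by rewrite mem_iota add0n => hk; apply: (h (Ordinal hk)).
by apply: h; rewrite mem_iota add0n ltn_ord.
Qed.

Lemma diag_run_refl m i : reflexive e -> diag_run m i i.
Proof. by move=> e_refl; apply/allP => k _; apply: e_refl. Qed.

Variable n : nat.

Definition boxed_run m i j :=
  [&& i != j, i + m <= n, j + m <= n & diag_run m i j].

Definition maxright_run m i j := boxed_run m i j && ~~ boxed_run m.+1 i j.

Definition diag_line m i j :=
  [&& i <= n - m, j <= n - m, i != j, diag_run m i j,
      (0 < minn i j) ==> ~~ e i.-1 j.-1 &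
      (maxn i j < n - m) ==> ~~ e (i + m) (j + m)].

Definition count_runs m := \sum_(i < n) \sum_(j < n) diag_run m i j.

Definition count_overflow_runs m := \sum_(i < n) \sum_(j < n)
  [&& i != j, diag_run m i j & ~~ ((i + m <= n) && (j + m <= n))].

(* Unlike [count_runs], these range over [0, n], as [num_lines] does. *)
Definition count_boxed_runs m :=
  \sum_(i < n.+1) \sum_(j < n.+1) boxed_run m i j.

Definition count_maxright_runs m :=
  \sum_(i < n.+1) \sum_(j < n.+1) maxright_run m i j.

Definition count_lines m := \sum_(i < n.+1) \sum_(j < n.+1) diag_line m i j.

Lemma boxed_runS m i j : boxed_run m.+1 i j = e i j && boxed_run m i.+1 j.+1.
Proof.
rewrite /boxed_run diag_runS eqSS !addSnnS.
by case: (e i j) (i != j) (i + m.+1 <= n) (j + m.+1 <= n) => [] [] [] [].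
Qed.

Lemma boxed_run_shorten m i j : boxed_run m.+1 i j -> boxed_run m i j.
Proof.
rewrite /boxed_run diag_runSr => /and4P[-> ? ? /andP[-> _]].
by rewrite !andbT; apply/andP; split; lia.
Qed.

Lemma boxed_run_out m i j : (n < i + m) || (n < j + m) -> boxed_run m i j = false.
Proof. by move=> out; apply/negbTE/negP => /and4P[_ ? ? _]; lia. Qed.

Lemma maxright_runS m i j :
  maxright_run m.+1 i j = maxright_run m i.+1 j.+1 && e i j.
Proof.
rewrite /maxright_run (boxed_runS m.+1) (boxed_runS m).
by case: (e i j); rewrite /= ?andbT ?andbF.
Qed.

Lemma diag_line_maxright_runE m i j :
  diag_line m i j = maxright_run m i j && ~~ ((0 < minn i j) && e i.-1 j.-1).
Proof.
rewrite /diag_line /maxright_run /boxed_run diag_runSr.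
case: (diag_run m i j) (e (i + m) (j + m)) (e i.-1 j.-1) => [] [] [];
  rewrite ?andbF ?andbT ?andFb ?andTb /=; apply/idP/idP; lia.
Qed.

Lemma count_boxed_runsS m :
  count_boxed_runs m = count_boxed_runs m.+1 + count_maxright_runs m.
Proof.
rewrite -big_split; apply: eq_bigr => i _; rewrite -big_split.
apply: eq_bigr => j _ /=; rewrite /maxright_run.
by case E: (boxed_run m.+1 i j); [rewrite (boxed_run_shorten E) | case: boxed_run].
Qed.

(* Extending a maximal run backward by one cell is a bijection from the
   forward-maximal runs of length m that are not lines onto the
   forward-maximal runs of length m + 1. *)
Lemma count_maxright_runs_backward m :
  \sum_(i < n.+1) \sum_(j < n.+1)
     (maxright_run m i j && ((0 < minn i j) && e i.-1 j.-1))
  = count_maxright_runs m.+1.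
Proof.
have maxright_run_edge i : maxright_run m.+1 i n = false /\ maxright_run m.+1 n i = false.
  by rewrite /maxright_run !boxed_run_out //; lia.
rewrite big_ord_recl /= big1 ?add0n => [|j _]; last by rewrite min0n andbF.
rewrite [RHS]big_ord_recr /= [X in _ = _ + X]big1 ?addn0 => [|j _]; last first.
  by case: (maxright_run_edge j) => _ ->.
apply: eq_bigr => i _; rewrite big_ord_recl andbF add0n.
rewrite [RHS]big_ord_recr /= (proj1 (maxright_run_edge i)) addn0.
apply: eq_bigr => j _.
by rewrite /bump !add1n minnSS maxright_runS; case: maxright_run.
Qed.

Lemma count_maxright_runsS m :
  count_maxright_runs m = count_lines m + count_maxright_runs m.+1.
Proof.
rewrite -count_maxright_runs_backward /count_lines -big_split; apply: eq_bigr => i _.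
rewrite -big_split; apply: eq_bigr => j _ /=; rewrite diag_line_maxright_runE.
by case: (maxright_run m i j) ((0 < minn i j) && e i.-1 j.-1) => [] [].
Qed.

Lemma count_runs_long m : n < m ->
  count_boxed_runs m = 0 /\ count_maxright_runs m = 0.
Proof.
move=> ?; rewrite /count_boxed_runs /count_maxright_runs /maxright_run.
by split; rewrite big1 // => i _; rewrite big1 // => j _; rewrite boxed_run_out //; lia.
Qed.

Lemma sum_weighted_lines l :
  \sum_(l <= L < n.+1) L * count_lines L
  = l * count_maxright_runs l + count_boxed_runs l.+1.
Proof.
elim: {l}(n.+1 - l) {-2}l (erefl (n.+1 - l)) => [|d IH] l hd.
  have n_lt_l : n < l by lia.
  have [_ ->] := count_runs_long n_lt_l; have [-> _] := count_runs_long (leqW n_lt_l).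
  by rewrite big_geq ?muln0 //; lia.
rewrite big_ltn; last by lia.
rewrite IH; last by lia.
by rewrite (count_maxright_runsS l) (count_boxed_runsS l.+1); lia.
Qed.

Lemma count_boxed_runs_ord m : 0 < m ->
  count_boxed_runs m = \sum_(i < n) \sum_(j < n) boxed_run m i j.
Proof.
move=> m_gt0; rewrite /count_boxed_runs big_ord_recr /=.
rewrite [X in _ + X]big1 ?addn0 => [|j _]; last by rewrite boxed_run_out //; lia.
apply: eq_bigr => i _; rewrite big_ord_recr /= boxed_run_out ?addn0 //; lia.
Qed.

Lemma count_runs_split m : reflexive e -> 0 < m ->
  count_runs m = n + count_boxed_runs m + count_overflow_runs m.
Proof.
move=> e_refl m_gt0; rewrite count_boxed_runs_ord //.
have diag_runE (i j : 'I_n) : diag_run m i j = (i == j) + boxed_run m i j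
    + [&& i != j :> nat, diag_run m i j & ~~ ((i + m <= n) && (j + m <= n))] :> nat.
  rewrite /boxed_run; have [<-|ij] := eqVneq i j; first by rewrite diag_run_refl // eqxx.
  by rewrite (ij : i != j :> nat); case: diag_run (i + m <= n) (j + m <= n) => [] [] [].
rewrite -{1}[n]card_ord -sum1_card -!big_split; apply: eq_bigr => i _.
by rewrite -(sum_ord_eq i) -!big_split; apply: eq_bigr => j _; apply: diag_runE.
Qed.

Lemma count_overflow_runs_le m : count_overflow_runs m <= 2 * (m.-1 * n.-1).
Proof.
rewrite mul2n -addnn.
apply: leq_trans (leq_add (sum_offdiag_late_le n m) (sum_offdiag_late_le n m)).
rewrite [X in _ <= _ + X]exchange_big -big_split leq_sum // => i _.
rewrite -big_split leq_sum // => j _ /=.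
have [->|ij] := eqVneq i j; first by rewrite eqxx.
rewrite (ij : i != j :> nat) eq_sym (ij : i != j :> nat) /=; case: diag_run => //=.
by case: (leqP (i + m) n) => ?; case: (leqP (j + m) n).
Qed.

Lemma count_runs_identity l : reflexive e -> 0 < l ->
  l * count_runs l + l.-1 * count_overflow_runs l.+1
  = n + (l * count_maxright_runs l + count_boxed_runs l.+1)
    + l.-1 * count_runs l.+1 + l * count_overflow_runs l.
Proof.
move=> e_refl l_gt0.
rewrite !count_runs_split // (count_boxed_runsS l); nia.
Qed.

End DiagonalRuns.

Local Open Scope ring_scope.

(* delta = ((L - 1) D2 - L D1) / (N (N - 1)), and both products lie in
   [0, 2 L (L - 1) (N - 1)]. *)
Lemma recurrence_rate_algebra (R : realFieldType) (S P1 P2 D1 D2 L N : R) :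
  1 < N -> 1 <= L ->
  L * P1 + (L - 1) * D2 = N + S + (L - 1) * P2 + L * D1 ->
  0 <= D1 <= 2 * ((L - 1) * (N - 1)) -> 0 <= D2 <= 2 * (L * (N - 1)) ->
  exists delta,
    S / (N ^+ 2 - N) =
      N / (N - 1) * (L * (P1 / N ^+ 2) - (L - 1) * (P2 / N ^+ 2))
      - 1 / (N - 1) + delta
    /\ `|delta| <= 2 * L * (L - 1) / N.
Proof.
move=> N_gt1 L_ge1 identity /andP[D1_ge0 D1_le] /andP[D2_ge0 D2_le].
have N0 : N != 0 by rewrite gt_eqF //; lra.
have N1 : N - 1 != 0 by rewrite subr_eq0 gt_eqF.
have K_gt0 : 0 < N * (N - 1) by apply: mulr_gt0; lra.
exists (((L - 1) * D2 - L * D1) / (N * (N - 1))); split.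
  have -> : S = L * P1 + (L - 1) * D2 - N - (L - 1) * P2 - L * D1 by lra.
  have -> : N ^+ 2 - N = N * (N - 1) by ring.
  by field; rewrite N0 N1.
have -> : 2 * L * (L - 1) / N = 2 * (L * ((L - 1) * (N - 1))) / (N * (N - 1)).
  by field; rewrite N0 N1.
rewrite normrM [`|_^-1|]gtr0_norm ?invr_gt0 // ler_pM2r ?invr_gt0 //.
by rewrite ler_norml; apply/andP; split; nra.
Qed.

Section RecurrencePlot.
Variables (R : realType) (X : Type) (rho : X -> X -> R) (f : X -> X).

Lemma num_linesE x n eps L :
  num_lines rho f x n eps L = count_lines (rp_entry rho f x eps) n L.
Proof.
rewrite /num_lines (card_pairsE _ (fun i j => is_line rho f x n eps i j L)).
by apply: eq_bigr => i _; apply: eq_bigr => j _; rewrite /is_line diag_run_forallE.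
Qed.

Lemma recurrence_rateE l x n eps :
  recurrence_rate rho f l x n eps =
  (\sum_(l <= L < n.+1) L * count_lines (rp_entry rho f x eps) n L)%:R
    / ((n ^ 2)%:R - n%:R).
Proof.
rewrite /recurrence_rate /line_freq natr_sum mulr_suml; apply: eq_bigr => L _.
by rewrite natrM mulrA num_linesE.
Qed.

Lemma corr_sumE m x n eps : 0 <= eps ->
  corr_sum rho f m x n eps =
  (count_runs (rp_entry rho f x eps) n m)%:R / (n ^ 2)%:R.
Proof.
move=> eps_ge0; rewrite /corr_sum.
rewrite (card_pairsE _ (fun i j => bowen rho f m (iter i f x) (iter j f x) <= eps)).
congr (_%:R / _); apply: eq_bigr => i _; apply: eq_bigr => j _; congr nat_of_bool.
have iterE k p : iter k f (iter p f x) = iter (p + k) f x by rewrite -iterD addnC.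
rewrite -diag_run_forallE /bowen; apply/bigmax_leP/forallP => [[_ h] k | h].
  by have := h k isT; rewrite !iterE.
by split=> // k _; have := h k; rewrite /rp_entry !iterE.
Qed.

End RecurrencePlot.

Theorem mainTheorem7 (R : realType) (X : Type) (rho : X -> X -> R)
    (f : X -> X) (x : X) (l n : nat) (eps : R) :
  is_metric rho -> metric_continuous rho f ->
  (1 <= l)%N -> (2 <= n)%N -> 0 < eps ->
  exists delta : R,
    recurrence_rate rho f l x n eps =
      n%:R / (n%:R - 1) *
        (l%:R * corr_sum rho f l x n eps
         - (l%:R - 1) * corr_sum rho f l.+1 x n eps)
      - 1 / (n%:R - 1) + delta
    /\ `|delta| <= 2 * l%:R * (l%:R - 1) / n%:R.
Proof.
move=> [_ rho0 _ _] _ l_ge1 n_ge2 eps_gt0.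
set e := rp_entry rho f x eps.
have e_refl : reflexive e by move=> k; rewrite /e /rp_entry (proj2 (rho0 _ _)) ?ltW.
have l1E : l.-1%:R = l%:R - 1 :> R by rewrite -subn1 natrB.
have n1E : n.-1%:R = n%:R - 1 :> R by rewrite -subn1 natrB //; lia.
rewrite recurrence_rateE !corr_sumE ?ltW // sum_weighted_lines natrX.
apply: (@recurrence_rate_algebra _ _ _ _
  (count_overflow_runs e n l)%:R (count_overflow_runs e n l.+1)%:R).
- by rewrite ltr1n.
- by rewrite ler1n.
- by rewrite -l1E -!natrM -!natrD count_runs_identity.
- by rewrite ler0n -l1E -n1E -!natrM ler_nat count_overflow_runs_le.
- by rewrite ler0n -n1E -!natrM ler_nat count_overflow_runs_le.
Qed.
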